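(* Let $q$ be a prime power and let $l$ be an odd prime with $l\nmid q$. Then every monic irreducible factor of $x^{l}-1$ in $\mathbb{F}_{q^2}[x]$ is SCRIM if and only if $\mathrm{ord}_l(q^2)$ is odd and $\mathrm{ord}_l(q)$ is even.
   Context: $\mathbb{F}_{q^2}$ is the finite field with $q^2$ elements. For $\alpha\in\mathbb{F}_{q^2}$ put $\bar\alpha=\alpha^q$, and for $f(x)=\sum_i f_ix^i\in\mathbb{F}_{q^2}[x]$ put $\overline{f(x)}=\sum_i \bar f_i x^i$. For $f(x)$ with $f(0)\neq 0$, its reciprocal is $f^*(x)=x^{\deg f}f(0)^{-1}f(1/x)$ and its conjugate-reciprocal is $f^\dagger(x)=\overline{f^*(x)}$. A polynomial $f(x)\in\mathbb{F}_{q^2}[x]$ is SCRIM (self-conjugate-reciprocal irreducible monic) if it is monic, irreducible, $f(0)\ne 0$, and $f(x)=f^\dagger(x)$. For coprime integers $m,a$, $\mathrm{ord}_m(a)$ is the least positive $s$ with $a^s\equiv 1 \pmod m$. *)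

From HB Require Import structures.
From mathcomp Require Import all_boot all_order all_algebra all_field.
Set Implicit Arguments. Unset Strict Implicit. Unset Printing Implicit Defensive.
Import GRing.Theory.
Local Open Scope ring_scope.

(* ord_m(a): least positive s with a^s = 1 (mod m).  Since ord_m(a) <= totient m < m
   whenever coprime m a and 1 < m, searching s in 1..m is exhaustive in that case. *)
Definition ord_mod (m a : nat) : nat :=
  (find (fun s => a ^ s.+1 == 1 %[mod m]) (iota 0 m)).+1.

Definition conjq {F : finFieldType} (q : nat) (f : {poly F}) : {poly F} :=
  map_poly (fun a : F => a ^+ q) f.

(* reciprocal: x^(deg f) f(0)^{-1} f(1/x) *)
Definition recip {F : fieldType} (f : {poly F}) : {poly F} :=
  (f`_0)^-1 *: \poly_(i < size f) f`_((size f).-1 - i).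

Definition conj_recip {F : finFieldType} (q : nat) (f : {poly F}) : {poly F} :=
  conjq q (recip f).

Definition SCRIM {F : finFieldType} (q : nat) (f : {poly F}) : Prop :=
  [/\ f \is monic, irreducible_poly f, f`_0 != 0 & f = conj_recip q f].

From HB Require Import structures.
From mathcomp Require Import all_boot all_order all_algebra all_field.
From mathcomp Require Import all_fingroup all_solvable.
From Stdlib Require Import Classical.
Set Implicit Arguments. Unset Strict Implicit. Unset Printing Implicit Defensive.
Import GRing.Theory.

(* Let t be a root of a monic irreducible factor f of x^l - 1 in an extension of F_{q^2}.
   Applying the Frobenius x |-> x^q to recip f (x) = f(0)^-1 x^(deg f) f(1/x) shows that
   f^dagger vanishes at t^-q; as f^dagger is monic of the degree of f, f is SCRIM iff
   f(t^-q) = 0. The roots of f form the orbit of t under x |-> x^(q^2), so this means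
   t^-q = t^(q^(2i)) for some i. That follows from l | q^(2i) + q for every l-th root of
   unity t, and implies it when t is primitive, as are the roots of any irreducible factor
   of 1 + x + ... + x^(l-1) (l is invertible in F). Finally l | q^(2i) + q for some i iff
   q^k = -1 (mod l) for some odd k, and q^k = -1 (mod l) iff d | 2k but not d | k, where
   d = ord_l(q); such an odd k exists iff d is even and ord_l(q^2) = d/2 is odd. *)

Lemma leq_totient n : totient n <= n.
Proof.
rewrite totient_count_coprime -[X in _ <= X]subn0 -[X in _ <= X]muln1.
by rewrite -sum_nat_const_nat; apply: leq_sum => d _; apply: leq_b1.
Qed.

Section OrdMod.

Variables (m a : nat).
Hypotheses (m_gt1 : 1 < m) (co_am : coprime a m).
Local Notation ord := (ord_mod m a).
Local Notation P := (fun s => a ^ s.+1 == 1 %[mod m]).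

Let has_ord : has P (iota 0 m).
Proof.
have totient_pos : 0 < totient m by rewrite totient_gt0 ltnW.
apply/hasP; exists (totient m).-1; last by rewrite prednK // Euler_exp_totient.
by rewrite mem_iota /= prednK // leq_totient.
Qed.

Let find_lt : find P (iota 0 m) < m.
Proof. by rewrite -[m in _ < m](size_iota 0) -has_find. Qed.

Lemma expn_ord_mod : a ^ ord = 1 %[mod m].
Proof. by apply/eqP; have := nth_find 0 has_ord; rewrite nth_iota. Qed.

Lemma ord_mod_min s : 0 < s -> a ^ s = 1 %[mod m] -> ord <= s.
Proof.
case: s => // s _ /eqP as1; rewrite ltnS leqNgt; apply/negP => lt_s.
by have := before_find 0 lt_s; rewrite nth_iota ?as1 // (ltn_trans lt_s find_lt).
Qed.

Lemma ord_mod_dvd s : (a ^ s == 1 %[mod m]) = (ord %| s).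
Proof.
have -> : a ^ s = a ^ (s %% ord) %[mod m].
  rewrite {1}(divn_eq s ord) expnD expnM expnAC -modnMml -modnXm expn_ord_mod.
  by rewrite modnXm exp1n modnMml mul1n.
rewrite /dvdn; have [-> | s_gt0] := posnP (s %% ord); first by rewrite eqxx.
by apply/negbTE/negP => /eqP /(ord_mod_min s_gt0); rewrite leqNgt ltn_pmod.
Qed.

End OrdMod.

Lemma ord_mod_sqr m a : 1 < m -> coprime a m -> ~~ odd (ord_mod m a) ->
  ord_mod m (a ^ 2) = (ord_mod m a)./2.
Proof.
move=> m_gt1 co_am ord_even.
have ordE : ord_mod m a = (ord_mod m a)./2 * 2.
  by rewrite muln2 -[LHS]odd_double_half (negbTE ord_even).
have dvd_ord_sqr s : (ord_mod m (a ^ 2) %| s) = ((ord_mod m a)./2 %| s).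
  rewrite -ord_mod_dvd ?coprimeXl // -expnM mulnC ord_mod_dvd // {1}ordE.
  by rewrite dvdn_pmul2r.
by apply/eqP; rewrite eqn_dvd dvd_ord_sqr dvdnn -dvd_ord_sqr dvdnn.
Qed.

Section OddPowerOpp1.

Variables l q : nat.
Hypotheses (l_prime : prime l) (l_odd : odd l) (co_ql : coprime q l).
Local Notation d := (ord_mod l q).

Let l_gt2 : 2 < l.
Proof. by move: (prime_gt1 l_prime) l_odd; case: l => [|[|[]]]. Qed.

Let q_gt0 : 0 < q.
Proof.
move: co_ql; case: q => //; rewrite /coprime gcd0n => /eqP l1.
by move: l_gt2; rewrite l1.
Qed.

Lemma dvdn_expn_add1 k : (l %| q ^ k + 1) = (d %| k * 2) && ~~ (d %| k).
Proof.
have dvd_sub1 j : (d %| j) = (l %| q ^ j - 1).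
  by rewrite -ord_mod_dvd ?prime_gt1 // eqn_mod_dvd // expn_gt0 q_gt0.
have not_both : ~~ ((l %| q ^ k - 1) && (l %| q ^ k + 1)).
  apply/negP => /andP [dvd_sub dvd_add]; move: (dvdn_sub dvd_add dvd_sub).
  rewrite subnBA ?expn_gt0 ?q_gt0 // -addnA addKn.
  by move/(dvdn_leq (isT : 0 < 2)); rewrite leqNgt l_gt2.
have sub1E : q ^ (k * 2) - 1 = (q ^ k - 1) * (q ^ k + 1) by rewrite -subn_sqr expnM.
rewrite !dvd_sub1 sub1E Euclid_dvdM //.
by move: not_both; case: (l %| _ - 1); case: (l %| _ + 1).
Qed.

Lemma odd_expn_add1P :
  (exists2 k, odd k & l %| q ^ k + 1) <-> odd (ord_mod l (q ^ 2)) /\ ~~ odd d.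
Proof.
have l_gt1 := prime_gt1 l_prime.
split=> [[k k_odd] | [ord2_odd d_even]].
  rewrite dvdn_expn_add1 => /andP [d_dvd_k2 d_Ndvd_k].
  have d_even : ~~ odd d.
    by apply: contra d_Ndvd_k => d_odd; rewrite -(Gauss_dvdl _ (_ : coprime d 2)) ?coprimen2.
  split=> //; rewrite ord_mod_sqr //.
  have dE : d = d./2 * 2 by rewrite muln2 -[LHS]odd_double_half (negbTE d_even).
  move: d_dvd_k2; rewrite {1}dE dvdn_pmul2r // => /dvdnP [c kE].
  by move: k_odd; rewrite kE oddM => /andP [].
rewrite ord_mod_sqr // in ord2_odd.
have dE : d = d./2 * 2 by rewrite muln2 -[LHS]odd_double_half (negbTE d_even).
have half_gt0 : 0 < d./2 by case: (d./2) ord2_odd.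
exists d./2 => //; rewrite dvdn_expn_add1 -dE dvdnn gtnNdvd //.
by rewrite {2}dE ltn_Pmulr.
Qed.

Lemma sqr_expn_addP :
  (exists i, l %| (q ^ 2) ^ i + q) <-> (exists2 k, odd k & l %| q ^ k + 1).
Proof.
have sqr_expnSE j : (q ^ 2) ^ j.+1 + q = (q ^ j.*2.+1 + 1) * q.
  by rewrite mulnDl mul1n -expnSr -expnM mul2n doubleS.
have co_lq : coprime l q by rewrite coprime_sym.
split=> [[[|j]] | [k k_odd]].
- by rewrite expn0 addnC => ?; exists 1.
- by rewrite sqr_expnSE (Gauss_dvdl _ co_lq); exists j.*2.+1; rewrite //= odd_double.
exists (k./2).+1; rewrite sqr_expnSE (Gauss_dvdl _ co_lq).
by have := odd_double_half k; rewrite k_odd add1n => ->.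
Qed.

End OddPowerOpp1.

Local Open Scope ring_scope.

Lemma horner_frobenius (R : comNzRingType) n (h : {poly R}) x :
  [pchar R].-nat n -> (map_poly (fun a => a ^+ n) h).[x ^+ n] = h.[x] ^+ n.
Proof.
move=> n_pchar; have n_gt0 : (0 < n)%N by case/andP: n_pchar.
have zeroXn : (0 : R) ^+ n = 0 by rewrite expr0n gtn_eqF.
rewrite (horner_coef_wide _ (size_poly _ _)) horner_coef.
rewrite (big_morph (fun y => y ^+ n) (fun a b => exprDn_pchar a b n_pchar) zeroXn).
by apply: eq_bigr => i _; rewrite coef_poly ltn_ord exprMn exprAC.
Qed.

Lemma map_conjq (F : finFieldType) (R : nzRingType) (phi : {rmorphism F -> R}) q f :
  (0 < q)%N -> map_poly phi (conjq q f) = map_poly (fun a => a ^+ q) (map_poly phi f).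
Proof.
move=> q_gt0; apply/polyP => i.
rewrite coef_map /conjq !coef_map_id0 ?rmorph0 ?expr0n ?gtn_eqF //.
exact: rmorphXn.
Qed.

Section Conjq.

Variables (F : finFieldType) (q : nat).
Hypothesis q_gt0 : (0 < q)%N.

Let frobenius0 : (0 : F) ^+ q = 0.
Proof. by rewrite expr0n gtn_eqF. Qed.

Lemma size_conjq (p : {poly F}) : size (conjq q p) = size p.
Proof.
have [-> | p_neq0] := eqVneq p 0; first by rewrite /conjq map_poly0.
by rewrite size_map_poly_id0 // expf_neq0 ?lead_coef_eq0.
Qed.

Lemma conjq_monic (p : {poly F}) : p \is monic -> conjq q p \is monic.
Proof.
rewrite !monicE => /eqP lp1.
by rewrite lead_coef_map_id0 ?frobenius0 //= lp1 expr1n ?oner_neq0.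
Qed.

End Conjq.

Lemma horner_recip (F : fieldType) (f : {poly F}) x : x != 0 ->
  (recip f).[x] = (f`_0)^-1 * x ^+ (size f).-1 * f.[x^-1].
Proof.
move=> x_neq0; rewrite /recip hornerZ horner_poly horner_coef -mulrA; congr (_ * _).
rewrite big_distrr (reindex_inj rev_ord_inj) /=; apply: eq_bigr => i _.
have -> : (size f).-1 = (size f - i.+1 + i)%N.
  by rewrite subnS predn_sub subnK // -ltnS prednK // (leq_ltn_trans _ (ltn_ord i)).
by rewrite addKn mulrCA exprD exprVn mulrK // unitfE expf_neq0.
Qed.

Lemma map_recip (F R : fieldType) (phi : {rmorphism F -> R}) f :
  map_poly phi (recip f) = recip (map_poly phi f).
Proof.
apply/polyP => i; rewrite coef_map /recip !coefZ !coef_poly size_map_poly.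
case: ifP => [i_lt|_]; last by rewrite !mulr0; apply: rmorph0.
have size_gt0 : (0 < size f)%N := leq_ltn_trans (leq0n i) i_lt.
rewrite size_gt0 (leq_ltn_trans (leq_subr _ _)) ?prednK //.
by apply: (etrans (rmorphM phi _ _)); rewrite fmorphV.
Qed.

Lemma size_recip (F : fieldType) (f : {poly F}) : f`_0 != 0 -> size (recip f) = size f.
Proof. by move=> f0; rewrite /recip size_scale ?invr_eq0 // size_poly_eq // subnn. Qed.

Lemma recip_monic (F : fieldType) (f : {poly F}) : f`_0 != 0 -> recip f \is monic.
Proof.
move=> f0; have size_gt0 : (0 < size f)%N.
  by rewrite size_poly_gt0; apply: contraNneq f0 => ->; rewrite coef0.
by apply/monicP; rewrite /recip lead_coefZ lead_coef_poly ?subnn ?mulVf.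
Qed.

Lemma root_conj_recip (F : finFieldType) (L : fieldExtType F) q (f : {poly F}) (r : L) :
  [pchar L].-nat q -> r != 0 -> root (map_poly (in_alg L) f) r ->
  root (map_poly (in_alg L) (conj_recip q f)) (r^-1 ^+ q).
Proof.
move=> q_pchar r_neq0 /rootP fr0; have q_gt0 : (0 < q)%N by case/andP: q_pchar.
rewrite /root /conj_recip map_conjq // horner_frobenius // map_recip.
by rewrite horner_recip ?invr_eq0 // invrK fr0 mulr0 expr0n gtn_eqF.
Qed.

Lemma exists_monic_irredp_dvdp (F : fieldType) (p : {poly F}) : (1 < size p)%N ->
  exists f, [/\ f \is monic, irreducible_poly f & f %| p].
Proof.
elim: {p}_.+1 {-2}p (ltnSn (size p)) => // n IHn p size_lt size_gt1.
have p_neq0 : p != 0 by rewrite -size_poly_gt0 ltnW.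
have [[g [g_size g_dvd g_Neqp]] | no_factor] :=
  classic (exists g : {poly F}, [/\ size g != 1, g %| p & ~~ (g %= p)]).
  have g_neq0 : g != 0 by apply: contraNneq p_neq0 => g0; move: g_dvd; rewrite g0 dvd0p.
  have g_lt : (size g < size p)%N by rewrite ltn_neqAle dvdp_size_eqp // g_Neqp dvdp_leq.
  have g_gt1 : (1 < size g)%N by rewrite ltn_neqAle eq_sym g_size size_poly_gt0.
  have [f [f_monic f_irr f_dvd]] := IHn g (leq_trans g_lt size_lt) g_gt1.
  by exists f; split=> //; apply: dvdp_trans g_dvd.
have lc_neq0 : (lead_coef p)^-1 != 0 by rewrite invr_eq0 lead_coef_eq0.
exists ((lead_coef p)^-1 *: p); split; last by rewrite dvdpZl.
  by rewrite monicE lead_coefZ mulVf ?lead_coef_eq0.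
split=> [|g g_size]; first by rewrite size_scale.
rewrite dvdpZr // (eqp_rtrans (eqp_scale p lc_neq0)) => g_dvd.
by apply/negPn/negP => g_Neqp; apply: no_factor; exists g.
Qed.

Lemma exists_root_splittingField (F : finFieldType) (f : {poly F}) : (1 < size f)%N ->
  exists (L : splittingFieldType F) (t : L), root (map_poly (in_alg L) f) t.
Proof.
move=> size_gt1; have f_neq0 : f != 0 by rewrite -size_poly_gt0 ltnW.
have [L [[|t ts] fE _]] := FinSplittingFieldFor f_neq0; exists L.
  move: fE; rewrite big_nil -size_poly_eq1 size_map_poly => /eqP size1.
  by rewrite size1 in size_gt1.
by exists t; rewrite (eqp_root fE) big_cons rootM root_XsubC eqxx.
Qed.

Lemma irredp_dvdp_root (F : fieldType) (L : fieldExtType F) (f h : {poly F}) (t : L) :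
  irreducible_poly f -> root (map_poly (in_alg L) f) t ->
  root (map_poly (in_alg L) h) t -> f %| h.
Proof.
move=> f_irr ft ht; have g_root : root (map_poly (in_alg L) (gcdp f h)) t.
  by rewrite gcdp_map root_gcd ft ht.
have g_size : size (gcdp f h) != 1%N.
  apply/negP => /size_poly1P [c c_neq0 gE]; move: g_root.
  by rewrite gE map_polyC rootC fmorph_eq0 (negbTE c_neq0).
by rewrite -(eqp_dvdl _ (f_irr _ g_size (dvdp_gcdl f h))) dvdp_gcdr.
Qed.

Lemma minPoly1_finField_rootsP (F : finFieldType) (L : splittingFieldType F) (t y : L) :
  root (minPoly 1 t) y <-> exists i, y = t ^+ (#|F| ^ i).
Proof.
have [alpha gen_alpha alphaE] := finField_galois_generator (sub1v {:L}%AS).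
have galE : ('Gal({:L} / 1) = <[alpha]>)%g by apply/eqP.
have alphaXE i x : (alpha ^+ i)%g x = x ^+ (#|F| ^ i).
  elim: i => [|i IHi]; first by rewrite expg0 gal_id expr1.
  by rewrite expgSr galM ?memvf // IHi alphaE ?memvf // dimv1 expn1 -exprM expnSr.
split=> [y_root | [i ->]].
  have normal1 : normalField 1 {:L} by case/and3P: (finField_galois (sub1v {:L}%AS)).
  have [g] := normalField_root_minPoly (sub1v _) normal1 (memvf t) y_root.
  by rewrite galE => /cycleP [i ->] <-; exists i.
by rewrite -alphaXE root_minPoly_gal ?sub1v ?memvf // galE mem_cycle.
Qed.

Lemma irredp_finField_rootsP (F : finFieldType) (L : splittingFieldType F)
    (f : {poly F}) (t y : L) :
  irreducible_poly f -> root (map_poly (in_alg L) f) t ->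
  root (map_poly (in_alg L) f) y <-> exists i, y = t ^+ (#|F| ^ i).
Proof.
move=> f_irr ft; rewrite -minPoly1_finField_rootsP.
have [g gE] := polyOver1P (minPolyOver 1 t).
have f_dvd_g : f %| g by apply: (irredp_dvdp_root f_irr ft); rewrite -gE root_minPoly.
have minPoly_dvd : minPoly 1 t %| map_poly (in_alg L) f.
  by apply: minPoly_dvdp ft; apply/polyOver1P; exists f.
split=> [fy | /(root_dvdp minPoly_dvd) //].
by rewrite gE; apply: root_dvdp fy; rewrite dvdp_map.
Qed.

Lemma SCRIM_invX_rootP (F : finFieldType) (L : fieldExtType F) q (f : {poly F}) (t : L) :
  [pchar L].-nat q -> f \is monic -> irreducible_poly f -> f`_0 != 0 ->
  root (map_poly (in_alg L) f) t ->
  SCRIM q f <-> root (map_poly (in_alg L) f) (t^-1 ^+ q).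
Proof.
move=> q_pchar f_monic f_irr f0 ft; have q_gt0 : (0 < q)%N by case/andP: q_pchar.
have t_neq0 : t != 0.
  apply: contraNneq f0 => t0; move: ft.
  by rewrite t0 rootE horner_coef0 coef_map fmorph_eq0.
have dagger_root := root_conj_recip q_pchar t_neq0 ft.
split=> [[_ _ _ fE] | ft']; first by rewrite fE.
split=> //; apply/eqP; rewrite -eqp_monic ?conjq_monic ?recip_monic //.
rewrite -dvdp_size_eqp ?size_conjq ?size_recip //.
exact: irredp_dvdp_root ft' dagger_root.
Qed.

Lemma root_dvdp_Xn_sub1 (R : fieldType) (S : idomainType) (phi : {rmorphism R -> S})
    n (f : {poly R}) t :
  f %| 'X^n - 1 -> root (map_poly phi f) t -> t ^+ n = 1.
Proof.
move=> f_dvd ft; have : root (map_poly phi ('X^n - 1)) t.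
  by apply: root_dvdp ft; rewrite dvdp_map.
by rewrite rmorphB /= map_polyXn rmorph1 rootE !hornerE subr_eq0 => /eqP.
Qed.

Lemma coef0_dvdp_Xn_sub1 (R : fieldType) n (f : {poly R}) :
  (0 < n)%N -> f %| 'X^n - 1 -> f`_0 != 0.
Proof.
move=> n_gt0 f_dvd; apply/eqP => f0.
have /(root_dvdp f_dvd) : root f 0 by rewrite rootE horner_coef0 f0.
by rewrite rootE !hornerE expr0n gtn_eqF // sub0r oppr_eq0 oner_eq0.
Qed.

Lemma root_sumXn_prim (R : idomainType) l (t : R) : prime l -> l%:R != 0 :> R ->
  root (\sum_(i < l) 'X^i) t -> l.-primitive_root t.
Proof.
move=> l_prime l_neq0 /rootP; rewrite horner_sum; under eq_bigr do rewrite hornerXn.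
move=> sum0; have tl1 : t ^+ l = 1 by apply/eqP; rewrite -subr_eq0 subrX1 sum0 mulr0.
have t_neq1 : t != 1.
  apply: contra_neq l_neq0 => t1; rewrite -sum0 t1.
  by under eq_bigr do rewrite expr1n; rewrite sumr_const card_ord.
have [m m_prim m_dvd] := prim_order_exists (prime_gt0 l_prime) tl1.
case/primeP: l_prime => _ /(_ m m_dvd) /orP [/eqP m1 | /eqP <- //].
by move: (prim_expr_order m_prim); rewrite m1 expr1 => /eqP; rewrite (negbTE t_neq1).
Qed.

Lemma exists_irredp_prim_root (F : fieldType) l : prime l -> l%:R != 0 :> F ->
  exists f, [/\ f \is monic, irreducible_poly f, f %| 'X^l - 1 &
    forall (L : fieldExtType F) (t : L), root (map_poly (in_alg L) f) t -> l.-primitive_root t].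
Proof.
move=> l_prime l_neq0; pose Phi : {poly F} := \sum_(i < l) 'X^i.
have XlE : 'X^l - 1 = ('X - 1) * Phi := subrX1 'X l.
have size_Xl : size ('X^l - 1 : {poly F}) = l.+1 by rewrite -polyC1 size_XnsubC ?prime_gt0.
have Phi_neq0 : Phi != 0.
  by apply/eqP => Phi0; move: size_Xl; rewrite XlE Phi0 mulr0 size_poly0.
have Phi_size : (1 < size Phi)%N.
  move: size_Xl; rewrite XlE size_mul ?polyXsubC_eq0 // -polyC1 size_XsubC /=.
  by case; rewrite add0n => ->; apply: prime_gt1.
have [f [f_monic f_irr f_dvd]] := exists_monic_irredp_dvdp Phi_size.
exists f; split=> //; first by rewrite XlE dvdp_mull.
move=> L t ft; apply: root_sumXn_prim => //.
  by rewrite -(rmorph_nat (in_alg L)) fmorph_eq0.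
have PhiL : map_poly (in_alg L) Phi = \sum_(i < l) 'X^i.
  by rewrite rmorph_sum; apply: eq_bigr => i _; apply: map_polyXn.
by rewrite -PhiL; apply: root_dvdp ft; rewrite dvdp_map.
Qed.

Lemma prim_root_invXE (R : fieldType) l (t : R) a b : l.-primitive_root t ->
  (t^-1 ^+ a == t ^+ b) = (l %| a + b)%N.
Proof.
move=> t_prim; have t_neq0 : t != 0.
  apply/eqP => t0; move: (prim_expr_order t_prim).
  by rewrite t0 expr0n gtn_eqF ?(prim_order_gt0 t_prim) // => /eqP; rewrite eq_sym oner_eq0.
rewrite (prim_order_dvd t_prim) exprD exprVn.
by apply/eqP/eqP => [<- | /mulr1_eq //]; rewrite mulfV ?expf_neq0.
Qed.

Lemma unity_root_invX (R : fieldType) l (t : R) a b : (0 < l)%N -> t ^+ l = 1 ->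
  (l %| a + b)%N -> t^-1 ^+ a = t ^+ b.
Proof.
move=> l_gt0 tl1 l_dvd; have [m t_prim m_dvd] := prim_order_exists l_gt0 tl1.
by apply/eqP; rewrite (prim_root_invXE _ _ t_prim) (dvdn_trans m_dvd).
Qed.

Unset Implicit Arguments.

Theorem theorem2p2 (F : finFieldType) (q l : nat) :
  (exists p k : nat, [/\ prime p, (0 < k)%N & q = (p ^ k)%N]) ->
  #|F| = (q ^ 2)%N ->
  prime l -> odd l -> ~~ (l %| q)%N ->
  (forall f : {poly F},
      f \is monic -> irreducible_poly f -> f %| 'X^l - 1 -> SCRIM q f)
  <-> (odd (ord_mod l (q ^ 2)) /\ ~~ odd (ord_mod l q)).
Proof.
move=> [p [k [p_prime k_gt0 qE]]] cardF l_prime l_odd l_Ndvd_q.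
have co_ql : coprime q l by rewrite coprime_sym prime_coprime.
have p_char : p \in [pchar F] by apply: (@card_finPcharP _ _ (k * 2)); rewrite // cardF qE expnM.
have q_pchar (L : fieldExtType F) : [pchar L].-nat q.
  by rewrite qE pnatX pnatE // (pchar_lalg L) p_char.
have l_neq0 : l%:R != 0 :> F.
  rewrite -(dvdn_pcharf p_char) dvdn_prime2 //.
  by apply: contraNneq l_Ndvd_q => <-; rewrite qE dvdn_exp.
rewrite -odd_expn_add1P // -sqr_expn_addP // -cardF.
split=> [all_SCRIM | [i l_dvd] f f_monic f_irr f_dvd].
  have [f [f_monic f_irr f_dvd f_prim]] := exists_irredp_prim_root l_prime l_neq0.
  have [L [t ft]] := exists_root_splittingField f_irr.1.
  have f_SCRIM := all_SCRIM f f_monic f_irr f_dvd; have [_ _ f0 _] := f_SCRIM.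
  have /(irredp_finField_rootsP _ f_irr ft) [i /eqP] :=
    (SCRIM_invX_rootP (q_pchar L) f_monic f_irr f0 ft).1 f_SCRIM.
  by rewrite (prim_root_invXE _ _ (f_prim L t ft)) addnC; exists i.
have [L [t ft]] := exists_root_splittingField f_irr.1.
have f0 := coef0_dvdp_Xn_sub1 (prime_gt0 l_prime) f_dvd.
apply/(SCRIM_invX_rootP (q_pchar L) f_monic f_irr f0 ft)/(irredp_finField_rootsP _ f_irr ft).
exists i; apply: (unity_root_invX (prime_gt0 l_prime) (root_dvdp_Xn_sub1 f_dvd ft)).
by rewrite addnC.
Qed.
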